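(* Let $L\subset\mathbb{Z}^m$ be a non-zero lattice with $L\cap\mathbb{N}^m=\{\mathbf 0\}$, and let $q$ be the number of elements of $\mathcal{T}_{\min}$. Then $\mathrm{bar}(I_L)\ge\lceil q/2\rceil$.
   Context: $K$ is a field, $I_L=(\mathbf x^{\mathbf u_+}-\mathbf x^{\mathbf u_-}:\mathbf u\in L)\subset K[x_1,\ldots,x_m]$ where $\mathbf u_\pm$ are the positive/negative parts of $\mathbf u$. A monomial $M$ is indispensable of $I_L$ if every system of binomial generators of $I_L$ contains a binomial having $M$ as a monomial. $\mathcal{T}_{\min}$ is the set of inclusion-minimal elements among supports $\mathrm{supp}(M)=\{i:x_i\mid M\}$ of indispensable monomials $M$ of $I_L$. $\mathrm{bar}(I_L)$ is the least $s$ such that there are binomials $B_1,\ldots,B_s\in I_L$ with $\mathrm{rad}(I_L)=\mathrm{rad}(B_1,\ldots,B_s)$. *)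

From HB Require Import structures.
From mathcomp Require Import all_boot all_order all_algebra.
From mathcomp Require Import mpoly.
Set Implicit Arguments. Unset Strict Implicit. Unset Printing Implicit Defensive.
Import Order.TTheory GRing.Theory Num.Theory.
Local Open Scope ring_scope.

Section LatticeIdeals.
Variables (K : fieldType) (m : nat).

(* Z^m is represented by row vectors 'rV[int]_m; N^m (exponents) by 'X_{1..m}. *)

(* L is a lattice: a subgroup of Z^m (automatically finitely generated). *)
Definition is_lattice (L : 'rV[int]_m -> Prop) : Prop :=
  L 0 /\ (forall u v, L u -> L v -> L (u - v)).

Definition nonzero_lattice (L : 'rV[int]_m -> Prop) : Prop :=
  exists u, L u /\ u != 0.

Definition meets_Nm_trivially (L : 'rV[int]_m -> Prop) : Prop :=
  forall u, L u -> (forall i, 0 <= u ord0 i) -> u = 0.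

Definition pos_part (u : 'rV[int]_m) : 'X_{1..m} :=
  [multinom `|Num.max (u ord0 i) 0|%N | i < m].
Definition neg_part (u : 'rV[int]_m) : 'X_{1..m} :=
  [multinom `|Num.max (- u ord0 i) 0|%N | i < m].

Definition ideal_gen (S : {mpoly K[m]} -> Prop) (p : {mpoly K[m]}) : Prop :=
  exists cs : seq ({mpoly K[m]} * {mpoly K[m]}),
    (forall c, c \in cs -> S c.2) /\ p = \sum_(c <- cs) c.1 * c.2.

Definition lattice_ideal (L : 'rV[int]_m -> Prop) : {mpoly K[m]} -> Prop :=
  ideal_gen (fun f => exists u, L u /\ f = 'X_[pos_part u] - 'X_[neg_part u]).

Definition radical (I : {mpoly K[m]} -> Prop) (p : {mpoly K[m]}) : Prop :=
  exists n : nat, I (p ^+ n).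

Definition binomial (p : {mpoly K[m]}) : Prop :=
  exists (c1 c2 : K) (a b : 'X_{1..m}), p = c1 *: 'X_[a] - c2 *: 'X_[b].

Definition binomial_generating_system (I : {mpoly K[m]} -> Prop)
    (S : {mpoly K[m]} -> Prop) : Prop :=
  (forall f, S f -> binomial f) /\ (forall p, ideal_gen S p <-> I p).

Definition indispensable_monomial (L : 'rV[int]_m -> Prop) (a : 'X_{1..m}) : Prop :=
  forall S, binomial_generating_system (lattice_ideal L) S ->
    exists f, S f /\ a \in msupp f.

Definition monomial_support (a : 'X_{1..m}) : {set 'I_m} :=
  [set i | (0 < a i)%N].

Definition is_indisp_support (L : 'rV[int]_m -> Prop) (T : {set 'I_m}) : Prop :=
  exists a, indispensable_monomial L a /\ monomial_support a = T.

Definition in_Tmin (L : 'rV[int]_m -> Prop) (T : {set 'I_m}) : Prop :=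
  is_indisp_support L T /\
  (forall T', is_indisp_support L T' -> T' \subset T -> T' = T).

(* there are s binomials B_1..B_s in I_L with rad(I_L) = rad(B_1,...,B_s);
   bar(I_L) is the least such s *)
Definition binomial_radical_generators (L : 'rV[int]_m -> Prop) (s : nat) : Prop :=
  exists Bs : seq {mpoly K[m]},
    size Bs = s /\
    (forall B, B \in Bs -> binomial B /\ lattice_ideal L B) /\
    (forall p, radical (lattice_ideal L) p <->
               radical (ideal_gen (fun f => f \in Bs)) p).

End LatticeIdeals.

From Pilot Require Import Defs.
From HB Require Import structures.
From mathcomp Require Import all_boot all_order all_algebra.
From mathcomp Require Import mpoly.
From mathcomp Require Import zify.
From Stdlib Require Import ClassicalDescription Classical.

(* Every polynomial of I_L has, on each coset c + L of exponent vectors, coefficients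
   summing to zero; so each monomial x^b of a nonzero element of I_L is paired with
   another monomial x^c, c - b in L, which yields v in L \ 0 with v_+ <= b.  Hence the
   inclusion-minimal v_+ are indispensable, and a support T in T_min contains the
   support of no v_+ other than T itself.
   Given T in T_min, write T = supp u_+ with u in L.  As L meets N^m only in 0, u_- is
   nonzero and its support avoids T, so substituting 0 for the variables outside T
   sends a power of x^{u_+} - x^{u_-}, which lies in the ideal of any binomials
   B_1, ..., B_s with the radical of I_L, to a power of x^{u_+}.  Thus some B_j has
   a monomial x^b with supp b included in T, hence equal to T.  A binomial has at
   most two monomials, so s >= q/2. *)

Set Implicit Arguments. Unset Strict Implicit. Unset Printing Implicit Defensive.
Import Order.TTheory GRing.Theory Num.Theory.
Local Open Scope ring_scope.

Section PosNegParts.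
Variable m : nat.
Implicit Types (u v : 'rV[int]_m) (a b e : 'X_{1..m}).

Lemma pos_partB_neg_part u i :
  (pos_part u i)%:Z - (neg_part u i)%:Z = u ord0 i.
Proof. by rewrite /pos_part /neg_part !mnmE; lia. Qed.

Lemma pos_partN u : pos_part (- u) = neg_part u.
Proof. by apply/mnmP => i; rewrite !mnmE mxE. Qed.

Lemma pos_part_eq_neg_part u : (pos_part u == neg_part u) = (u == 0).
Proof.
apply/eqP/eqP => [E | ->]; last by apply/mnmP => i; rewrite !mnmE mxE oppr0.
apply/rowP => i; rewrite mxE -pos_partB_neg_part E; lia.
Qed.

Lemma neg_part_eq0 u i : (0 < pos_part u i)%N -> neg_part u i = 0%N.
Proof. by rewrite /pos_part /neg_part !mnmE; lia. Qed.

Definition mnm_diff a b : 'rV[int]_m := \row_i ((a i)%:Z - (b i)%:Z).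

Lemma mnm_diff_eq0 a b : (mnm_diff a b == 0) = (a == b).
Proof.
apply/eqP/eqP => [E | ->]; last by apply/rowP => i; rewrite !mxE subrr.
by apply/mnmP => i; have := congr1 (fun v => v ord0 i) E; rewrite !mxE; lia.
Qed.

Lemma oppr_mnm_diff a b : - mnm_diff a b = mnm_diff b a.
Proof. by apply/rowP => i; rewrite !mxE opprB. Qed.

Lemma pos_part_mnm_diff_le a b : (pos_part (mnm_diff a b) <= a)%MM.
Proof. by apply/mnm_lepP => i; rewrite mnmE mxE; lia. Qed.

Lemma mnm_diff_shift e c u :
  mnm_diff (e + pos_part u) c = mnm_diff (e + neg_part u) c + u.
Proof.
apply/rowP => i; rewrite !mxE !mnmDE -(pos_partB_neg_part u i); lia.
Qed.

Lemma lepm_anti a b : (a <= b)%MM -> (b <= a)%MM -> a = b.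
Proof.
move=> /mnm_lepP ab /mnm_lepP ba; apply/mnmP => i.
by apply/eqP; rewrite eqn_leq ab ba.
Qed.

Lemma monomial_support_le a b :
  (a <= b)%MM -> monomial_support a \subset monomial_support b.
Proof.
move/mnm_lepP => ab; apply/subsetP => i; rewrite !inE => /leq_trans; exact.
Qed.

Lemma mdeg_lt a b : (a <= b)%MM -> a != b -> (mdeg a < mdeg b)%N.
Proof.
move=> /submK ab; rewrite -{1 2}ab mdegD -{1}[mdeg a]add0n ltn_add2r lt0n.
by rewrite mdeg_eq0; apply: contraNneq => ->; rewrite add0m.
Qed.

End PosNegParts.

Section LatticeClosure.
Variables (m : nat) (L : 'rV[int]_m -> Prop).
Hypothesis latL : is_lattice L.

Lemma lattice0 : L 0.
Proof. by case: latL. Qed.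

Lemma latticeN u : L u -> L (- u).
Proof. by move=> Lu; rewrite -sub0r; apply: latL.2 => //; apply: lattice0. Qed.

Lemma latticeD u v : L u -> L v -> L (u + v).
Proof. by move=> Lu Lv; rewrite -[v]opprK; apply: latL.2 => //; apply: latticeN. Qed.

End LatticeClosure.

Lemma ideal_gen_msupp_divisor (K : fieldType) (m : nat) (S : {mpoly K[m]} -> Prop)
    p (a : 'X_{1..m}) : ideal_gen S p -> a \in msupp p ->
  exists2 f, S f & exists2 b, b \in msupp f & (b <= a)%MM.
Proof.
move=> [cs [S_cs ->]] /msupp_sum_le/flatten_mapP [c]; rewrite mem_filter => /andP [_ c_cs].
move/msuppM_le/allpairsP => [[d b] /= [_ b_supp ->]].
by exists c.2; [apply: S_cs | exists b => //; apply: lem_addl].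
Qed.

Lemma ideal_gen_self (K : fieldType) (m : nat) (S : {mpoly K[m]} -> Prop) f :
  S f -> ideal_gen S f.
Proof.
move=> Sf; exists [:: (1, f)]; split; first by move=> c; rewrite inE => /eqP ->.
by rewrite big_seq1 mul1r.
Qed.

Section CosetSum.
Variables (K : fieldType) (m : nat) (L : 'rV[int]_m -> Prop).
Hypothesis latL : is_lattice L.
Implicit Types (a b c e : 'X_{1..m}) (p q : {mpoly K[m]}).

Definition coset_ind c e : K :=
  if excluded_middle_informative (L (mnm_diff e c)) then 1 else 0.

Definition coset_sum c p : K := \sum_(e <- msupp p) p@_e * coset_ind c e.

Lemma coset_sumE c p (r : seq 'X_{1..m}) : uniq r -> {subset msupp p <= r} ->
  coset_sum c p = \sum_(e <- r) p@_e * coset_ind c e.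
Proof.
move=> ur pr; rewrite /coset_sum [RHS](bigID (mem (msupp p))) /=.
rewrite [X in _ = _ + X]big1 ?addr0 => [|e]; last first.
  by rewrite -mcoeff_eq0 => /eqP ->; rewrite mul0r.
rewrite -[RHS]big_filter; apply: perm_big; apply: uniq_perm; rewrite ?filter_uniq ?msupp_uniq //.
by move=> e; rewrite mem_filter andb_idr //; apply: pr.
Qed.

Lemma coset_sum_is_zmod_morphism c : zmod_morphism (coset_sum c).
Proof.
move=> p q; set r := undup (msupp p ++ msupp q).
have ur : uniq r by exact: undup_uniq.
have pr : {subset msupp p <= r} by move=> e ep; rewrite mem_undup mem_cat ep.
have qr : {subset msupp q <= r} by move=> e eq; rewrite mem_undup mem_cat eq orbT.
have pqr : {subset msupp (p - q) <= r} by move=> e /msuppB_le; rewrite mem_undup.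
rewrite !(@coset_sumE c _ r ur) // -sumrB.
by apply: eq_bigr => e _; rewrite mcoeffB mulrBl.
Qed.

HB.instance Definition _ c :=
  GRing.isZmodMorphism.Build {mpoly K[m]} K (coset_sum c)
    (coset_sum_is_zmod_morphism c).

Lemma coset_sumZX c k e : coset_sum c (k *: 'X_[e]) = k * coset_ind c e.
Proof.
rewrite (coset_sumE c _ (r := [:: e])) ?big_seq1 ?mcoeffZ ?mcoeffX ?eqxx ?mulr1 //.
by move=> x /msuppZ_le; rewrite msuppX.
Qed.

Lemma coset_ind_refl c : coset_ind c c = 1.
Proof.
rewrite /coset_ind; case: excluded_middle_informative => // [[]].
by move/eqP: (mnm_diff_eq0 c c); rewrite eqxx => ->; apply: lattice0.
Qed.

Lemma coset_ind_shift c e u : L u ->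
  coset_ind c (e + pos_part u) = coset_ind c (e + neg_part u).
Proof.
move=> Lu; rewrite /coset_ind mnm_diff_shift.
case: excluded_middle_informative => [L1|nL1]; case: excluded_middle_informative => // L2.
- by case: L2; rewrite -(addrK u (mnm_diff _ c)); apply: latL.2.
- by case: nL1; apply: latticeD.
Qed.

Lemma coset_sum_lattice_binomial c q u : L u ->
  coset_sum c (q * ('X_[pos_part u] - 'X_[neg_part u])) = 0.
Proof.
move=> Lu; rewrite [q]mpolyE mulr_suml raddf_sum big1 // => e _.
rewrite -scalerAl mulrBr -!mpolyXD scalerBr raddfB /= !coset_sumZX.
by rewrite coset_ind_shift ?subrr.
Qed.

Lemma coset_sum_lattice_ideal c p : lattice_ideal L p -> coset_sum c p = 0.
Proof.
case=> cs [gen_cs ->]; rewrite raddf_sum big_seq big1 // => x /gen_cs [u [Lu ->]].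
exact: coset_sum_lattice_binomial.
Qed.

Lemma lattice_ideal_msupp_partner p a : lattice_ideal L p -> a \in msupp p ->
  exists2 b, b \in msupp p & b != a /\ L (mnm_diff b a).
Proof.
move=> Ip ap; apply: NNPP => no_partner.
have := coset_sum_lattice_ideal a Ip; rewrite /coset_sum (bigD1_seq a) ?msupp_uniq //=.
rewrite coset_ind_refl mulr1 big1_seq ?addr0 => [|b /andP [ba bp]]; last first.
  rewrite /coset_ind; case: excluded_middle_informative => Lba; last by rewrite mulr0.
  by exfalso; apply: no_partner; exists b.
by apply/eqP; rewrite -mcoeff_msupp.
Qed.

Lemma lattice_ideal_msupp_pos_part p a : lattice_ideal L p -> a \in msupp p ->
  exists v, [/\ L v, v != 0 & (pos_part v <= a)%MM].
Proof.
move=> Ip /(lattice_ideal_msupp_partner Ip) [b _ [ba Lba]].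
exists (mnm_diff a b); split; last exact: pos_part_mnm_diff_le.
- by rewrite -oppr_mnm_diff; apply: latticeN.
- by rewrite mnm_diff_eq0 eq_sym.
Qed.

End CosetSum.

Section Indispensable.
Variables (K : fieldType) (m : nat) (L : 'rV[int]_m -> Prop).
Hypothesis latL : is_lattice L.
Implicit Types (u v w : 'rV[int]_m) (a : 'X_{1..m}).

Definition minimal_pos_part w : Prop :=
  [/\ L w, w != 0 & forall v, L v -> v != 0 ->
     (pos_part v <= pos_part w)%MM -> pos_part v = pos_part w].

Lemma exists_minimal_pos_part v : L v -> v != 0 ->
  exists2 w, minimal_pos_part w & (pos_part w <= pos_part v)%MM.
Proof.
have [n] := ubnP (mdeg (pos_part v)); elim: n v => // n IH v ltvn Lv nv.
have [min_v | not_min_v] := classic (minimal_pos_part v).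
  by exists v => //; apply: lepm_refl.
have [w [Lw nw wv neq_wv]] : exists w, [/\ L w, w != 0,
    (pos_part w <= pos_part v)%MM & pos_part w != pos_part v].
  apply: NNPP => none; apply: not_min_v; split=> // w Lw nw wv.
  by apply/eqP; apply: contraT => neq_wv; exfalso; apply: none; exists w.
have ltwn : (mdeg (pos_part w) < n)%N.
  by apply: leq_trans (mdeg_lt wv neq_wv) _; rewrite -ltnS.
have [w' min_w' w'w] := IH w ltwn Lw nw.
by exists w' => //; apply: lepm_trans wv.
Qed.

Lemma minimal_pos_part_indispensable w :
  minimal_pos_part w -> indispensable_monomial K L (pos_part w).
Proof.
move=> [Lw nw min_w] S [S_binomial S_gen].
have w_supp : pos_part w \in msupp ('X_[pos_part w] - 'X_[neg_part w] : {mpoly K[m]}).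
  rewrite mcoeff_msupp mcoeffB !mcoeffX eqxx [neg_part w == _]eq_sym pos_part_eq_neg_part.
  by rewrite (negbTE nw) subr0 oner_neq0.
have I_w : lattice_ideal L ('X_[pos_part w] - 'X_[neg_part w] : {mpoly K[m]}).
  by apply: ideal_gen_self; exists w.
have [f S_f [b b_supp bw]] := ideal_gen_msupp_divisor ((S_gen _).2 I_w) w_supp.
have I_f : lattice_ideal L f by apply/(S_gen _).1/ideal_gen_self.
have [v [Lv nv vb]] := lattice_ideal_msupp_pos_part latL I_f b_supp.
have vw := min_w v Lv nv (lepm_trans vb bw).
by exists f; split; last rewrite -(lepm_anti bw) // -vw.
Qed.

Lemma lattice_binomials_generate :
  binomial_generating_system (lattice_ideal L)
    (fun f : {mpoly K[m]} => exists u, L u /\ f = 'X_[pos_part u] - 'X_[neg_part u]).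
Proof.
split=> // f [u [_ ->]].
by exists 1, 1, (pos_part u), (neg_part u); rewrite !scale1r.
Qed.

Lemma indispensable_pos_part a : indispensable_monomial K L a ->
  exists u, [/\ L u, u != 0 & pos_part u = a].
Proof.
move=> /(_ _ lattice_binomials_generate) [_ [[u [Lu ->]] a_supp]].
have nu : u != 0.
  apply: contraTneq a_supp => ->.
  by rewrite (eqP (etrans (pos_part_eq_neg_part 0) (eqxx 0))) subrr msupp0.
move/msuppB_le: a_supp; rewrite mem_cat !msuppX !inE => /orP [] /eqP ->.
  by exists u.
by exists (- u); rewrite pos_partN oppr_eq0; split=> //; apply: latticeN.
Qed.

Lemma in_Tmin_pos_part T : in_Tmin K L T ->
  exists u, [/\ L u, u != 0 & monomial_support (pos_part u) = T].
Proof. by move=> [[a [/indispensable_pos_part [u [Lu nu <-]] <-]] _]; exists u. Qed.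

Lemma in_Tmin_minimal T v : in_Tmin K L T -> L v -> v != 0 ->
  monomial_support (pos_part v) \subset T -> monomial_support (pos_part v) = T.
Proof.
move=> [_ min_T] Lv nv vT.
have [w min_w wv] := exists_minimal_pos_part Lv nv.
have wT : monomial_support (pos_part w) = T.
  apply: min_T; last exact: subset_trans (monomial_support_le wv) vT.
  by exists (pos_part w); split=> //; apply: minimal_pos_part_indispensable.
by apply/eqP; rewrite eqEsubset vT /= -wT; apply: monomial_support_le.
Qed.

End Indispensable.

Lemma comp_mpolyXn (R : comNzRingType) (n k : nat) (lq : n.-tuple {mpoly R[k]}) e :
  {morph comp_mpoly lq : p / p ^+ e}.
Proof. by move=> p; apply: rmorphXn. Qed.

Lemma ideal_gen_comp_mpoly (K : fieldType) (n k : nat) (lq : n.-tuple {mpoly K[k]})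
    (S : {mpoly K[n]} -> Prop) p :
  ideal_gen S p -> ideal_gen (fun g => exists2 f, S f & g = f \mPo lq) (p \mPo lq).
Proof.
move=> [cs [S_cs ->]]; exists [seq (c.1 \mPo lq, c.2 \mPo lq) | c <- cs]; split.
  by move=> _ /mapP [c c_cs ->]; exists c.2; first exact: S_cs.
by rewrite raddf_sum big_map; apply: eq_bigr => c _; apply: rmorphM.
Qed.

Section VariableRestriction.
Variables (K : fieldType) (m : nat) (T : {set 'I_m}).

Definition zero_outside : m.-tuple {mpoly K[m]} :=
  [tuple if i \in T then 'X_i else 0 | i < m].

Lemma comp_zero_outsideX a :
  'X_[a] \mPo zero_outside = if monomial_support a \subset T then 'X_[a] else 0.
Proof.
rewrite comp_mpolyX; case: ifP => [/subsetP aT | /negbT /subsetPn [i ia iT]].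
  rewrite [RHS]mpolyXE_id; apply: eq_bigr => i _; rewrite tnth_mktuple.
  case: ifP => // iT; suff -> : a i = 0%N by rewrite !expr0.
  by apply/eqP; rewrite -leqn0 leqNgt; apply: contraFN iT => ai; apply: aT; rewrite inE.
rewrite (bigD1 i) //= tnth_mktuple (negbTE iT) expr0n.
by move: ia; rewrite inE lt0n => /negbTE ->; rewrite mul0r.
Qed.

Lemma msupp_comp_zero_outside p a : a \in msupp (p \mPo zero_outside) ->
  a \in msupp p /\ monomial_support a \subset T.
Proof.
rewrite {1}[p]mpolyE raddf_sum /= => /msupp_sum_le/flatten_mapP [e].
rewrite mem_filter => /andP [_ e_supp]; rewrite comp_mpolyZ comp_zero_outsideX.
case: ifP => [eT | _]; last by rewrite scaler0 msupp0.
by move=> /msuppZ_le; rewrite msuppX inE => /eqP ->.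
Qed.

End VariableRestriction.

Section RadicalGenerators.
Variables (K : fieldType) (m : nat) (L : 'rV[int]_m -> Prop).
Hypotheses (latL : is_lattice L) (L_trivial_Nm : meets_Nm_trivially L).

Lemma neg_part_support_not_pos u : L u -> u != 0 ->
  ~~ (monomial_support (neg_part u) \subset monomial_support (pos_part u)).
Proof.
move=> Lu nu; apply/subsetPn.
have [i neg_i] : exists i, (0 < neg_part u i)%N.
  apply: NNPP => no_neg; move/eqP: nu; apply; apply: L_trivial_Nm => // i.
  rewrite -pos_partB_neg_part; suff -> : neg_part u i = 0%N by rewrite subr0.
  by apply/eqP; rewrite -leqn0 leqNgt; apply/negP => ?; apply: no_neg; exists i.
exists i; rewrite !inE //; apply: contraTN neg_i => pos_i.
by rewrite neg_part_eq0.
Qed.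

Lemma radical_generators_meet_Tmin T (Bs : seq {mpoly K[m]}) : in_Tmin K L T ->
  (forall p, lattice_ideal L p -> radical (ideal_gen (fun f => f \in Bs)) p) ->
  (forall B, B \in Bs -> lattice_ideal L B) ->
  exists2 B, B \in Bs & exists2 a, a \in msupp B & monomial_support a = T.
Proof.
move=> T_min I_rad I_Bs; have [u [Lu nu uT]] := in_Tmin_pos_part latL T_min.
have [|n gen_u] := I_rad ('X_[pos_part u] - 'X_[neg_part u]).
  by apply: ideal_gen_self; exists u.
have u_restr : ('X_[pos_part u] - 'X_[neg_part u]) ^+ n \mPo zero_outside K T
    = 'X_[pos_part u *+ n].
  rewrite comp_mpolyXn comp_mpolyB !comp_zero_outsideX -uT subxx.
  by rewrite (negbTE (neg_part_support_not_pos Lu nu)) subr0 mpolyXn.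
have nu_supp : (pos_part u *+ n)%MM \in msupp ('X_[pos_part u *+ n] : {mpoly K[m]}).
  by rewrite msuppX inE.
rewrite -u_restr in nu_supp.
have [_ [B B_Bs ->] [b /msupp_comp_zero_outside [b_supp bT] _]] :=
  ideal_gen_msupp_divisor (ideal_gen_comp_mpoly (zero_outside K T) gen_u) nu_supp.
have [v [Lv nv vb]] := lattice_ideal_msupp_pos_part latL (I_Bs B B_Bs) b_supp.
have vT := in_Tmin_minimal latL T_min Lv nv (subset_trans (monomial_support_le vb) bT).
exists B => //; exists b => //.
by apply/eqP; rewrite eqEsubset bT -vT monomial_support_le.
Qed.

End RadicalGenerators.

Lemma size_msupp_binomial (K : fieldType) (m : nat) (B : {mpoly K[m]}) :
  Defs.binomial B -> (size (msupp B) <= 2)%N.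
Proof.
case=> c1 [c2 [a [b ->]]]; apply: (@uniq_leq_size _ _ [:: a; b]).
  exact: msupp_uniq.
move=> e /msuppB_le; rewrite mem_cat => /orP [] /msuppZ_le; rewrite msuppX !inE => ->//.
by rewrite orbT.
Qed.

Lemma size_flatten_msupp_binomials (K : fieldType) (m : nat) (Bs : seq {mpoly K[m]}) :
  (forall B, B \in Bs -> Defs.binomial B) ->
  (size (flatten [seq msupp B | B <- Bs]) <= (size Bs).*2)%N.
Proof.
elim: Bs => [|B Bs IH] //= Bs_binomial.
have B_binomial := Bs_binomial B (mem_head _ _).
have := IH (fun B' B'_Bs => Bs_binomial B' (mem_behead (s := B :: Bs) B'_Bs)).
rewrite size_cat doubleS -addn2 addnC => /leq_add; apply.
exact: size_msupp_binomial.
Qed.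

Theorem proposition2p15 (K : fieldType) (m : nat) (L : 'rV[int]_m -> Prop)
    (Tmin : {set {set 'I_m}}) :
  is_lattice L -> nonzero_lattice L -> meets_Nm_trivially L ->
  (forall T, T \in Tmin <-> in_Tmin K L T) ->
  forall s : nat, binomial_radical_generators K L s ->
  (uphalf #|Tmin| <= s)%N.
Proof.
move=> latL _ L_trivial_Nm Tmin_E s [Bs [<- [Bs_gen Bs_rad]]].
have I_rad p : lattice_ideal L p -> radical (ideal_gen (fun f => f \in Bs)) p.
  by move=> Ip; apply/Bs_rad; exists 1%N; rewrite expr1.
set supports := [seq monomial_support a | a <- flatten [seq msupp B | B <- Bs]].
have Tmin_supports : Tmin \subset [set T in supports].
  apply/subsetP => T /Tmin_E T_min; rewrite inE.
  have [B B_Bs [a a_B <-]] := radical_generators_meet_Tmin latL L_trivial_Nm T_min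
    I_rad (fun B B_Bs => (Bs_gen B B_Bs).2).
  by apply: map_f; apply/flatten_mapP; exists B.
rewrite leq_uphalf_double (leq_trans (subset_leq_card Tmin_supports)) //.
rewrite cardsE (leq_trans (card_size _)) // size_map.
by apply: size_flatten_msupp_binomials => B /Bs_gen [].
Qed.
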